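(* For $t\in(0,1)$ and $n\ge0$, $y_n'(t)=t\,r_n'(t)$.
   Context: Fix $\alpha>0$, $\beta>0$, and real $A,B$ with $A\ge0$, $A+B\ge0$, not both zero; $\theta$ is the Heaviside step function. For $t\in(0,1)$ let $w(x;t)=x^\alpha(1-x)^\beta(A+B\theta(x-t))$ on $[0,1]$, and let $P_n(x)=P_n(x;t)=x^n+\mathsf p_1(n,t)x^{n-1}+\cdots$ be the monic orthogonal polynomials: $\int_0^1P_iP_jw\,dx=h_i(t)\delta_{ij}$, $h_i>0$. Define $r_n(t)=B\,t^\alpha(1-t)^\beta P_n(t;t)P_{n-1}(t;t)/h_{n-1}$ ($r_0=0$) and $y_n(t)=\frac{\beta}{h_{n-1}}\int_0^1\frac{P_n(y)P_{n-1}(y)}{1-y}\,y^\alpha(1-y)^\beta(A+B\theta(y-t))\,dy$ ($y_0=0$). A prime denotes $d/dt$. *)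

From Stdlib Require Import Reals Lra Lia.
Open Scope R_scope.

(* x^a for real a > 0, extended continuously by 0 at x <= 0
   (Stdlib's Rpower 0 a = 1, which would be wrong). *)
Definition pw (x a : R) : R := if Rle_dec x 0 then 0 else Rpower x a.

(* Heaviside step function, convention theta(0) = 1 (irrelevant for integrals). *)
Definition theta (x : R) : R := if Rlt_dec x 0 then 0 else 1.

Definition wt (alpha beta A B t x : R) : R :=
  pw x alpha * pw (1 - x) beta * (A + B * theta (x - t)).

Fixpoint sumR (f : nat -> R) (n : nat) : R :=
  match n with O => 0 | S m => sumR f m + f m end.

Definition monic_poly (n : nat) (p : R -> R) : Prop :=
  exists c : nat -> R, forall x, p x = x ^ n + sumR (fun k => c k * x ^ k) n.

Definition RInt_val (f : R -> R) (a b v : R) : Prop :=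
  exists pr : Riemann_integrable f a b, RiemannInt pr = v.

Definition improper_int01 (f : R -> R) (I : R) : Prop :=
  (forall c, 0 < c < 1 -> exists v, RInt_val f 0 c v) /\
  (forall eps, eps > 0 -> exists d, d > 0 /\
     forall c v, 1 - d < c < 1 -> RInt_val f 0 c v -> Rabs (v - I) < eps).

(* r_n(t) = B t^alpha (1-t)^beta P_n(t;t) P_{n-1}(t;t) / h_{n-1}(t), r_0 = 0.
   P n t is the polynomial P_n(.;t), h n t = h_n(t). *)
Definition r_fun (alpha beta B : R) (P : nat -> R -> R -> R) (h : nat -> R -> R)
  (n : nat) (t : R) : R :=
  match n with
  | O => 0
  | S m => B * pw t alpha * pw (1 - t) beta * P n t t * P m t t / h m t
  end.

From Stdlib Require Import Reals Lra Lia ClassicalEpsilon FunctionalExtensionality.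
Open Scope R_scope.

(* Moving the jump of the weight from t to s changes it by B rho on [t, s], where
   rho u = u^alpha (1-u)^beta.  Hence P_n(.;s) - P_n(.;t) = sum_{j<n} a_j(s) P_j(.;t) with
   a_j(s) = B int_t^s P_n(u;s) P_j(u;t) rho(u) du / h_j(t).  A bootstrap bound on the a_j makes
   P_n(u;s) Lipschitz in s, so a_j, h_n, P_n(s;s) and r_n are differentiable at t, with
   a_{n-1}'(t) = r_n(t).  Integrating by parts against u^(alpha+1) (1-u)^beta gives
   y_n(s) = s r_n(s) - p_1(n,s), and comparing x^(n-1) coefficients gives
   p_1(n,s) = p_1(n,t) + a_{n-1}(s); differentiating at s = t yields y_n' = r_n + t r_n' - r_n. *)

Lemma continuity_pt_eps (f : R -> R) x :
  continuity_pt f x <->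
  forall e, e > 0 -> exists d, d > 0 /\ forall y, Rabs (y - x) < d -> Rabs (f y - f x) < e.
Proof.
  split; intros H e He; destruct (H e He) as [d [Hd Hy]]; exists d; split; try lra.
  - intros y Hyx. destruct (Req_dec y x) as [->|Hne].
    + unfold Rminus. rewrite Rplus_opp_r, Rabs_R0. lra.
    + apply Hy. split; [split; [exact I | auto] | exact Hyx].
  - intros y [_ Hyx]. exact (Hy y Hyx).
Qed.

Lemma derivable_pt_locally_ext (f g : R -> R) x a b :
  a < x < b -> (forall z, a < z < b -> f z = g z) -> derivable_pt g x -> derivable_pt f x.
Proof.
  intros Hx Hfg [l Hl]. exists l.
  apply (derivable_pt_lim_locally_ext g f x a b l Hx); auto.
  intros z Hz. symmetry. auto.
Qed.

Lemma derivable_pt_sumR (F : nat -> R -> R) N x :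
  (forall k, (k < N)%nat -> derivable_pt (F k) x) -> derivable_pt (fun y => sumR (fun k => F k y) N) x.
Proof.
  induction N as [|N IH]; intros H; simpl; [apply derivable_pt_const |].
  apply derivable_pt_plus; [apply IH; intros |]; apply H; lia.
Qed.

Lemma continuous_bounded (f : R -> R) a b : a <= b ->
  (forall x, a <= x <= b -> continuity_pt f x) ->
  exists M, forall x, a <= x <= b -> Rabs (f x) <= M.
Proof.
  intros Hab Hf.
  destruct (continuity_ab_maj (fun x => Rabs (f x)) a b Hab) as [x0 [Hx0 _]].
  - intros x Hx. apply (continuity_pt_comp f Rabs); auto. apply Rcontinuity_abs.
  - exists (Rabs (f x0)). exact Hx0.
Qed.

Lemma bounded_family (Q : nat -> R -> R) :
  (forall k, exists M, forall u, 0 <= u <= 1 -> Rabs (Q k u) <= M) ->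
  forall n, exists M, forall k u, (k <= n)%nat -> 0 <= u <= 1 -> Rabs (Q k u) <= M.
Proof.
  intros HQ n. induction n as [|n [M HM]].
  - destruct (HQ 0%nat) as [M HM]. exists M. intros k u Hk Hu.
    replace k with 0%nat by lia. auto.
  - destruct (HQ (S n)) as [M' HM']. exists (Rmax M M'). intros k u Hk Hu.
    destruct (Nat.eq_dec k (S n)) as [->|Hne].
    + eapply Rle_trans; [apply HM'; auto | apply Rmax_r].
    + eapply Rle_trans; [apply HM; auto; lia | apply Rmax_l].
Qed.

(** * The power function [pw] *)

Lemma pw_pos_eq x a : 0 < x -> pw x a = Rpower x a.
Proof. intros H. unfold pw. destruct (Rle_dec x 0); [lra | auto]. Qed.

Lemma pw_nonpos x a : x <= 0 -> pw x a = 0.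
Proof. intros H. unfold pw. destruct (Rle_dec x 0); [auto | lra]. Qed.

Lemma pw_ge0 x a : 0 <= pw x a.
Proof. unfold pw. destruct (Rle_dec x 0); [lra |]. left. apply exp_pos. Qed.

Lemma pw_gt0 x a : 0 < x -> 0 < pw x a.
Proof. intros H. rewrite pw_pos_eq by auto. apply exp_pos. Qed.

Lemma pw_le1 x a : x <= 1 -> 0 <= a -> pw x a <= 1.
Proof.
  intros H Ha. unfold pw. destruct (Rle_dec x 0); [lra |].
  apply Rle_trans with (Rpower 1 a); [apply Rle_Rpower_l; lra |].
  unfold Rpower. rewrite ln_1, Rmult_0_r, exp_0. lra.
Qed.

Lemma pw_succ x a : pw x (a + 1) = x * pw x a.
Proof.
  destruct (Rle_dec x 0).
  - rewrite !pw_nonpos by auto. ring.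
  - rewrite !pw_pos_eq by lra. rewrite Rpower_plus, Rpower_1 by lra. ring.
Qed.

Lemma pw_small a : a > 0 ->
  forall e, e > 0 -> exists d, d > 0 /\ forall x, x < d -> pw x a < e.
Proof.
  intros Ha e He. exists (Rpower e (/ a)). split; [apply exp_pos |].
  intros x Hx. unfold pw. destruct (Rle_dec x 0); [lra |].
  apply Rlt_le_trans with (Rpower (Rpower e (/ a)) a); [apply Rlt_Rpower_l; lra |].
  rewrite Rpower_mult, Rinv_l by lra. unfold Rpower. rewrite Rmult_1_l, exp_ln; lra.
Qed.

Lemma derivable_pt_lim_pw_pos x a :
  0 < x -> derivable_pt_lim (fun u => pw u a) x (a * pw x (a - 1)).
Proof.
  intros Hx. rewrite pw_pos_eq by auto.
  apply (derivable_pt_lim_locally_ext (fun u => Rpower u a) _ x 0 (x + 1)); try lra.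
  - intros z Hz. symmetry. apply pw_pos_eq. lra.
  - apply derivable_pt_lim_power; auto.
Qed.

Lemma derivable_pt_lim_pw x a : a > 1 -> derivable_pt_lim (fun u => pw u a) x (a * pw x (a - 1)).
Proof.
  intros Ha. destruct (Rtotal_order x 0) as [Hx|[->|Hx]].
  - rewrite (pw_nonpos x) by lra. rewrite Rmult_0_r.
    apply (derivable_pt_lim_locally_ext (fun _ => 0) _ x (x - 1) 0); try lra.
    + intros z Hz. symmetry. apply pw_nonpos. lra.
    + apply derivable_pt_lim_const.
  - rewrite (pw_nonpos 0) by lra. rewrite Rmult_0_r.
    intros e He. destruct (pw_small (a - 1) ltac:(lra) e He) as [d [Hd Hsmall]].
    exists (mkposreal d Hd). intros k Hk0 Hk. simpl in Hk.
    rewrite Rplus_0_l, (pw_nonpos 0), !Rminus_0_r by lra.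
    destruct (Rle_dec k 0).
    + rewrite pw_nonpos by auto. unfold Rdiv. rewrite Rmult_0_l, Rabs_R0. auto.
    + replace a with ((a - 1) + 1) by ring. rewrite pw_succ.
      replace (k * pw k (a - 1) / k) with (pw k (a - 1)) by (field; auto).
      rewrite Rabs_pos_eq by apply pw_ge0. apply Hsmall.
      apply Rle_lt_trans with (2 := Hk), RRle_abs.
  - apply derivable_pt_lim_pw_pos; auto.
Qed.

Lemma continuity_pt_pw x a : a > 0 -> 0 <= x -> continuity_pt (fun u => pw u a) x.
Proof.
  intros Ha Hx. destruct (Req_dec x 0) as [->|Hn].
  - apply continuity_pt_eps. intros e He. destruct (pw_small a Ha e He) as [d [Hd Hsmall]].
    exists d. split; auto. intros y Hy. rewrite (pw_nonpos 0), Rminus_0_r in * by lra.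
    rewrite Rabs_pos_eq by apply pw_ge0. apply Hsmall.
    apply Rle_lt_trans with (2 := Hy), RRle_abs.
  - apply derivable_continuous_pt. exists (a * pw x (a - 1)). apply derivable_pt_lim_pw_pos. lra.
Qed.

Lemma derivable_pt_lim_pw_1m x a :
  x < 1 -> derivable_pt_lim (fun u => pw (1 - u) a) x (- (a * pw (1 - x) (a - 1))).
Proof.
  intros Hx. replace (- (a * pw (1 - x) (a - 1))) with (a * pw (1 - x) (a - 1) * (0 - 1)) by ring.
  apply (derivable_pt_lim_comp (fun u => 1 - u) (fun v => pw v a)).
  - apply (derivable_pt_lim_minus (fun _ => 1) id).
    + apply derivable_pt_lim_const.
    + apply derivable_pt_lim_id.
  - apply derivable_pt_lim_pw_pos. lra.
Qed.

Lemma continuity_pt_pw_1m x a : a > 0 -> x <= 1 -> continuity_pt (fun u => pw (1 - u) a) x.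
Proof.
  intros Ha Hx. apply (continuity_pt_comp (fun u => 1 - u) (fun v => pw v a)).
  - apply derivable_continuous_pt, derivable_pt_minus; [apply derivable_pt_const | apply derivable_pt_id].
  - apply continuity_pt_pw; lra.
Qed.

(** * Finite sums and polynomials *)

Lemma sumR_ext_lt (f g : nat -> R) N :
  (forall k, (k < N)%nat -> f k = g k) -> sumR f N = sumR g N.
Proof.
  induction N as [|N IH]; simpl; intros H; auto.
  rewrite IH, H; auto.
Qed.

Lemma sumR_ext (f g : nat -> R) N : (forall k, f k = g k) -> sumR f N = sumR g N.
Proof. intros H; apply sumR_ext_lt; auto. Qed.

Lemma sumR_plus (f g : nat -> R) N : sumR (fun k => f k + g k) N = sumR f N + sumR g N.
Proof. induction N as [|N IH]; simpl; [ring |]. rewrite IH; ring. Qed.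

Lemma sumR_scal (f : nat -> R) a N : sumR (fun k => a * f k) N = a * sumR f N.
Proof. induction N as [|N IH]; simpl; [ring |]. rewrite IH; ring. Qed.

Lemma sumR_const0 N : sumR (fun _ => 0) N = 0.
Proof. induction N as [|N IH]; simpl; [ring |]. rewrite IH; ring. Qed.

Lemma sumR_abs (f : nat -> R) N : Rabs (sumR f N) <= sumR (fun k => Rabs (f k)) N.
Proof.
  induction N as [|N IH]; simpl; [rewrite Rabs_R0; lra |].
  eapply Rle_trans; [apply Rabs_triang | lra].
Qed.

Lemma sumR_le (f g : nat -> R) N :
  (forall k, (k < N)%nat -> f k <= g k) -> sumR f N <= sumR g N.
Proof.
  induction N as [|N IH]; simpl; intros H; [lra |].
  apply Rplus_le_compat; [apply IH; intros; apply H | apply H]; lia.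
Qed.

Lemma sumR_ge0 (f : nat -> R) N : (forall k, 0 <= f k) -> 0 <= sumR f N.
Proof. intros H. induction N as [|N IH]; simpl; [lra |]. specialize (H N); lra. Qed.

Definition spoly (c : nat -> R) (N : nat) (x : R) : R := sumR (fun k => c k * x ^ k) N.

Definition dspoly (c : nat -> R) (N : nat) (x : R) : R :=
  sumR (fun k => c k * (INR k * x ^ pred k)) N.

Definition deg_lt (N : nat) (f : R -> R) : Prop := exists c, forall x, f x = spoly c N x.

Lemma spoly_S c N x : spoly c (S N) x = spoly c N x + c N * x ^ N.
Proof. reflexivity. Qed.

Lemma spoly_S_shift c N x : spoly c (S N) x = c 0%nat + x * spoly (fun k => c (S k)) N x.
Proof.
  induction N as [|N IH]; unfold spoly in *; simpl in *; [ring |].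
  rewrite IH. simpl. ring.
Qed.

Lemma spoly_sub c d N x : spoly c N x - spoly d N x = spoly (fun k => c k - d k) N x.
Proof.
  unfold spoly. replace (sumR (fun k => (c k - d k) * x ^ k) N)
    with (sumR (fun k => c k * x ^ k + (-1) * (d k * x ^ k)) N)
    by (apply sumR_ext; intros; ring).
  rewrite sumR_plus, sumR_scal. ring.
Qed.

Lemma spoly_scal a c N x : a * spoly c N x = spoly (fun k => a * c k) N x.
Proof. unfold spoly. rewrite <- sumR_scal. apply sumR_ext. intros; ring. Qed.

Lemma derivable_pt_lim_spoly c N x : derivable_pt_lim (spoly c N) x (dspoly c N x).
Proof.
  induction N as [|N IH]; unfold spoly, dspoly; simpl.
  - apply derivable_pt_lim_const.
  - apply (derivable_pt_lim_plus (spoly c N) (fun x => c N * x ^ N)); auto.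
    apply (derivable_pt_lim_scal (fun x => x ^ N)), derivable_pt_lim_pow.
Qed.

Lemma dspoly_S_shift c N x : dspoly c (S N) x = spoly (fun k => INR (S k) * c (S k)) N x.
Proof.
  induction N as [|N IH]; unfold dspoly, spoly in *; simpl in *; [ring |].
  rewrite IH; simpl; ring.
Qed.

Lemma x_dspoly c N x : x * dspoly c N x = spoly (fun k => INR k * c k) N x.
Proof.
  unfold dspoly, spoly. rewrite <- sumR_scal. apply sumR_ext. intros [|k]; simpl; ring.
Qed.

Lemma deg_lt_ext N f g : (forall x, f x = g x) -> deg_lt N f -> deg_lt N g.
Proof. intros H [c Hc]. exists c. intros x. rewrite <- H. auto. Qed.

Lemma deg_lt_S N f : deg_lt N f -> deg_lt (S N) f.
Proof.
  intros [c Hc]. exists (fun k => if Nat.ltb k N then c k else 0). intros x.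
  rewrite Hc, spoly_S, Nat.ltb_irrefl, Rmult_0_l, Rplus_0_r.
  apply sumR_ext_lt. intros k Hk. apply Nat.ltb_lt in Hk. rewrite Hk. auto.
Qed.

Lemma deg_lt_le N M f : (N <= M)%nat -> deg_lt N f -> deg_lt M f.
Proof. induction 1; auto. intros Hf. apply deg_lt_S; auto. Qed.

Lemma deg_lt_spoly c N : deg_lt N (spoly c N).
Proof. exists c. auto. Qed.

Lemma deg_lt_plus N f g : deg_lt N f -> deg_lt N g -> deg_lt N (fun x => f x + g x).
Proof.
  intros [c Hc] [d Hd]. exists (fun k => c k + d k). intros x. rewrite Hc, Hd.
  unfold spoly. rewrite <- sumR_plus. apply sumR_ext. intros; ring.
Qed.

Lemma deg_lt_scal N a f : deg_lt N f -> deg_lt N (fun x => a * f x).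
Proof.
  intros [c Hc]. exists (fun k => a * c k). intros x. rewrite Hc.
  unfold spoly. rewrite <- sumR_scal. apply sumR_ext. intros; ring.
Qed.

Lemma deg_lt_sumR N M (F : nat -> R -> R) :
  (forall k, (k < M)%nat -> deg_lt N (F k)) -> deg_lt N (fun x => sumR (fun k => F k x) M).
Proof.
  induction M as [|M IH]; intros H; simpl.
  - exists (fun _ => 0). intros x. symmetry. unfold spoly.
    rewrite (sumR_ext _ (fun _ => 0)) by (intros; ring). apply sumR_const0.
  - apply deg_lt_plus; [apply IH; intros |]; apply H; lia.
Qed.

Lemma deg_lt_pow n : deg_lt (S n) (fun x => x ^ n).
Proof.
  exists (fun k => if Nat.eqb k n then 1 else 0). intros x.
  rewrite spoly_S, Nat.eqb_refl. unfold spoly.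
  rewrite (sumR_ext_lt _ (fun _ => 0)), sumR_const0; [ring |].
  intros k Hk. destruct (Nat.eqb_spec k n); [lia | ring].
Qed.

Lemma monic_pow n : monic_poly n (fun x => x ^ n).
Proof.
  exists (fun _ => 0). intros x. unfold spoly in *.
  rewrite (sumR_ext _ (fun _ => 0)), sumR_const0 by (intros; ring). ring.
Qed.

Lemma monic_deg_lt n p : monic_poly n p -> deg_lt (S n) p.
Proof.
  intros [c Hc]. apply deg_lt_ext with (fun x => x ^ n + spoly c n x); [intros; auto |].
  apply deg_lt_plus; [apply deg_lt_pow | apply deg_lt_S, deg_lt_spoly].
Qed.

Lemma monic_sub_deg_lt n p q : monic_poly n p -> monic_poly n q -> deg_lt n (fun x => p x - q x).
Proof.
  intros [c Hc] [d Hd]. exists (fun k => c k - d k). intros x.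
  rewrite Hc, Hd, <- spoly_sub. unfold spoly. ring.
Qed.

Lemma derivable_pt_deg_lt N f x : deg_lt N f -> derivable_pt f x.
Proof.
  intros Hf. destruct (constructive_indefinite_description _ Hf) as [c Hc]. exists (dspoly c N x).
  apply (derivable_pt_lim_ext (spoly c N)); [intros; auto |]. apply derivable_pt_lim_spoly.
Qed.

Lemma continuity_pt_deg_lt N f x : deg_lt N f -> continuity_pt f x.
Proof. intros Hf. apply derivable_continuous_pt. eapply derivable_pt_deg_lt; eauto. Qed.

Lemma deg_lt_bounded N f : deg_lt N f -> exists M, forall u, 0 <= u <= 1 -> Rabs (f u) <= M.
Proof. intros Hf. apply continuous_bounded; [lra |]. intros; eapply continuity_pt_deg_lt; eauto. Qed.

Lemma spoly_zero_on_interval a b : a < b -> forall N c,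
  (forall x, a < x < b -> spoly c N x = 0) -> forall k, (k < N)%nat -> c k = 0.
Proof.
  intros Hab N. induction N as [|N IH]; intros c H k Hk; [lia |].
  assert (Hd : forall x, a < x < b -> spoly (fun k => INR (S k) * c (S k)) N x = 0).
  { intros x Hx. rewrite <- dspoly_S_shift.
    apply (uniqueness_limite (spoly c (S N)) x); [apply derivable_pt_lim_spoly |].
    apply (derivable_pt_lim_locally_ext (fun _ => 0) _ x a b); auto.
    - intros z Hz. symmetry. auto.
    - apply derivable_pt_lim_const. }
  assert (HS : forall j, (j < N)%nat -> c (S j) = 0).
  { intros j Hj. destruct (Rmult_integral _ _ (IH _ Hd j Hj)) as [E|E]; auto.
    pose proof (pos_INR j). rewrite S_INR in E. lra. }
  destruct k as [|k]; [| apply HS; lia].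
  specialize (H ((a + b) / 2) ltac:(lra)). rewrite spoly_S_shift in H.
  unfold spoly in H. rewrite (sumR_ext_lt _ (fun _ => 0)), sumR_const0 in H; [lra |].
  intros j Hj. rewrite HS by auto. ring.
Qed.

Lemma spoly_coef_unique a b N c d : a < b ->
  (forall x, a < x < b -> spoly c N x = spoly d N x) -> forall k, (k < N)%nat -> c k = d k.
Proof.
  intros Hab H k Hk. apply Rminus_diag_uniq.
  apply (spoly_zero_on_interval a b Hab N (fun k => c k - d k)); auto.
  intros x Hx. rewrite <- spoly_sub, H; auto; ring.
Qed.

Lemma monic_nonzero_at n p a b : a < b -> monic_poly n p -> exists x, a < x < b /\ p x <> 0.
Proof.
  intros Hab [c Hc]. apply NNPP. intros Hnz.
  set (c' := fun k => if Nat.ltb k n then c k else 1).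
  assert (Hc' : forall x, p x = spoly c' (S n) x).
  { intros x. rewrite Hc, spoly_S. unfold spoly, c'. rewrite Nat.ltb_irrefl.
    rewrite (sumR_ext_lt (fun k => (if Nat.ltb k n then c k else 1) * x ^ k)
      (fun k => c k * x ^ k)); [ring |].
    intros k Hk. apply Nat.ltb_lt in Hk. rewrite Hk. auto. }
  assert (Hz : c' n = 0).
  { apply (spoly_zero_on_interval a b Hab (S n)); [| lia].
    intros x Hx. rewrite <- Hc'. apply NNPP. intros Hp. apply Hnz. exists x; auto. }
  unfold c' in Hz. rewrite Nat.ltb_irrefl in Hz. lra.
Qed.

Definition dmonic (n : nat) (c : nat -> R) (x : R) : R := INR n * x ^ pred n + dspoly c n x.

Lemma derivable_pt_lim_monic n c x :
  derivable_pt_lim (fun x => x ^ n + spoly c n x) x (dmonic n c x).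
Proof.
  apply (derivable_pt_lim_plus (fun x => x ^ n));
    [apply derivable_pt_lim_pow | apply derivable_pt_lim_spoly].
Qed.

Lemma deg_lt_dmonic n c : deg_lt n (dmonic n c).
Proof.
  destruct n as [|n].
  - exists (fun _ => 0). intros x. unfold dmonic, dspoly, spoly. simpl. ring.
  - apply deg_lt_ext with (fun x => INR (S n) * x ^ n + spoly (fun k => INR (S k) * c (S k)) n x).
    + intros x. unfold dmonic. rewrite dspoly_S_shift. auto.
    + apply deg_lt_plus; [apply deg_lt_scal, deg_lt_pow | apply deg_lt_S, deg_lt_spoly].
Qed.

Lemma x_dmonic n c x :
  x * dmonic n c x = INR n * (x ^ n + spoly c n x) + spoly (fun k => (INR k - INR n) * c k) n x.
Proof.
  unfold dmonic. rewrite Rmult_plus_distr_l, x_dspoly.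
  replace (spoly (fun k => (INR k - INR n) * c k) n x)
    with (spoly (fun k => INR k * c k) n x - INR n * spoly c n x)
    by (rewrite spoly_scal, spoly_sub; apply sumR_ext; intros; ring).
  destruct n; simpl; ring.
Qed.

Lemma deg_lt_x_dmonic n c : deg_lt (S n) (fun x => x * dmonic n c x).
Proof.
  apply deg_lt_ext with (fun x => INR n * (x ^ n + spoly c n x)
    + spoly (fun k => (INR k - INR n) * c k) n x); [intros; rewrite x_dmonic; auto |].
  apply deg_lt_plus; [apply deg_lt_scal, deg_lt_plus | apply deg_lt_S, deg_lt_spoly].
  - apply deg_lt_pow.
  - apply deg_lt_S, deg_lt_spoly.
Qed.

Lemma spoly_top_coef a b m c q k : a < b -> deg_lt m q ->
  (forall x, a < x < b -> spoly c (S m) x = k * x ^ m + q x) -> c m = k.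
Proof.
  intros Hab [e He] H.
  set (e' := fun j => if Nat.ltb j m then e j else k).
  assert (Hm : e' m = k) by (unfold e'; rewrite Nat.ltb_irrefl; auto).
  rewrite <- Hm. apply (spoly_coef_unique a b (S m)); auto.
  intros x Hx. rewrite H, He, spoly_S, Hm, (Rplus_comm (k * x ^ m)) by auto. f_equal.
  apply sumR_ext_lt. intros j Hj. unfold e'. apply Nat.ltb_lt in Hj. rewrite Hj. auto.
Qed.

(** * Values of Riemann integrals *)

Lemma RInt_val_unique f a b u v : RInt_val f a b u -> RInt_val f a b v -> u = v.
Proof. intros [p1 <-] [p2 <-]. apply RiemannInt_P5. Qed.

Definition RInt_val_integrable f a b v (H : RInt_val f a b v) : Riemann_integrable f a b :=
  proj1_sig (constructive_indefinite_description _ H).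

Lemma RInt_val_RiemannInt f a b (pr : Riemann_integrable f a b) : RInt_val f a b (RiemannInt pr).
Proof. exists pr; auto. Qed.

Definition integral (f : R -> R) (a b : R) : R := epsilon (inhabits 0) (RInt_val f a b).

Lemma integral_spec f a b v : RInt_val f a b v -> integral f a b = v.
Proof.
  intros Hv. apply (RInt_val_unique f a b); auto.
  unfold integral. apply epsilon_spec. exists v. exact Hv.
Qed.

Lemma integral_same f a : integral f a a = 0.
Proof. apply integral_spec. exists (RiemannInt_P7 f a). apply RiemannInt_P9. Qed.

Lemma RInt_val_ext f g a b v : (forall x, f x = g x) -> RInt_val f a b v -> RInt_val g a b v.
Proof. intros H. replace g with f; auto. apply functional_extensionality. auto. Qed.

Lemma RInt_val_lin f g a b l u v : RInt_val f a b u -> RInt_val g a b v ->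
  RInt_val (fun x => f x + l * g x) a b (u + l * v).
Proof. intros [p1 <-] [p2 <-]. exists (RiemannInt_P10 l p1 p2). apply RiemannInt_P13. Qed.

Lemma RInt_val_const a b k : RInt_val (fun _ => k) a b (k * (b - a)).
Proof. exists (RiemannInt_P14 a b k). apply RiemannInt_P15. Qed.

Lemma RInt_val_zero a b : RInt_val (fun _ => 0) a b 0.
Proof. pose proof (RInt_val_const a b 0) as H. rewrite Rmult_0_l in H. exact H. Qed.

Lemma RInt_val_plus f g a b u v : RInt_val f a b u -> RInt_val g a b v ->
  RInt_val (fun x => f x + g x) a b (u + v).
Proof.
  intros Hf Hg. rewrite <- (Rmult_1_l v).
  apply RInt_val_ext with (fun x => f x + 1 * g x); [intros; ring | apply RInt_val_lin; auto].
Qed.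

Lemma RInt_val_minus f g a b u v : RInt_val f a b u -> RInt_val g a b v ->
  RInt_val (fun x => f x - g x) a b (u - v).
Proof.
  intros Hf Hg. replace (u - v) with (u + (-1) * v) by ring.
  apply RInt_val_ext with (fun x => f x + (-1) * g x); [intros; ring | apply RInt_val_lin; auto].
Qed.

Lemma RInt_val_scal f a b l v : RInt_val f a b v -> RInt_val (fun x => l * f x) a b (l * v).
Proof.
  intros H. rewrite <- (Rplus_0_l (l * v)).
  apply RInt_val_ext with (fun x => 0 + l * f x); [intros; ring |].
  apply RInt_val_lin; [apply RInt_val_zero | auto].
Qed.

Lemma RInt_val_ext_open f g a b v : a <= b -> (forall x, a < x < b -> f x = g x) ->
  RInt_val f a b v -> (exists u, RInt_val g a b u) -> RInt_val g a b v.
Proof. intros Hab H [p <-] [u [q _]]. exists q. symmetry. apply RiemannInt_P18; auto. Qed.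

Lemma RInt_val_ext_on f g a b v : a <= b -> (forall x, a <= x <= b -> f x = g x) ->
  RInt_val f a b v -> RInt_val g a b v.
Proof.
  intros Hab H Hv. apply (RInt_val_ext_open f g); auto; [intros; apply H; lra |].
  assert (Hfg : forall x, Rmin a b <= x <= Rmax a b -> f x = g x)
    by (rewrite Rmin_left, Rmax_right by lra; auto).
  exists (RiemannInt (Riemann_integrable_ext g Hfg (RInt_val_integrable _ _ _ _ Hv))).
  apply RInt_val_RiemannInt.
Qed.

Lemma RInt_val_chasles f a b c u v : RInt_val f a b u -> RInt_val f b c v -> RInt_val f a c (u + v).
Proof. intros [p1 <-] [p2 <-]. exists (RiemannInt_P24 p1 p2). symmetry. apply RiemannInt_P26. Qed.

Lemma RInt_val_swap f a b v : RInt_val f a b v -> RInt_val f b a (- v).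
Proof. intros [p <-]. exists (RiemannInt_P1 p). rewrite (RiemannInt_P8 p (RiemannInt_P1 p)). ring. Qed.

Lemma integral_swap f a b : (exists v, RInt_val f a b v) -> integral f a b = - integral f b a.
Proof.
  intros [v Hv]. rewrite (integral_spec _ _ _ _ Hv), (integral_spec _ _ _ _ (RInt_val_swap _ _ _ _ Hv)).
  ring.
Qed.

Lemma RInt_val_sub f a b c d v : RInt_val f a b v -> a <= c -> c <= d -> d <= b ->
  exists u, RInt_val f c d u.
Proof.
  intros Hv Hac Hcd Hdb. pose proof (RInt_val_integrable _ _ _ _ Hv) as p.
  exists (RiemannInt (RiemannInt_P23 (RiemannInt_P22 p (conj (Rle_trans _ _ _ Hac Hcd) Hdb))
    (conj Hac Hcd))).
  apply RInt_val_RiemannInt.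
Qed.

Lemma RInt_val_split f a b c v : RInt_val f a b v -> a <= c <= b ->
  exists u w, RInt_val f a c u /\ RInt_val f c b w /\ v = u + w.
Proof.
  intros Hv Hc. destruct (RInt_val_sub f a b a c v Hv) as [u Hu]; try lra.
  destruct (RInt_val_sub f a b c b v Hv) as [w Hw]; try lra.
  exists u, w. repeat split; auto. apply (RInt_val_unique f a b); auto.
  apply (RInt_val_chasles f a c b); auto.
Qed.

Lemma RInt_val_le f g a b u v : a <= b -> (forall x, a < x < b -> f x <= g x) ->
  RInt_val f a b u -> RInt_val g a b v -> u <= v.
Proof. intros Hab H [p <-] [q <-]. apply RiemannInt_P19; auto. Qed.

Lemma RInt_val_abs_le f a b v M : a <= b -> (forall x, a < x < b -> Rabs (f x) <= M) ->
  RInt_val f a b v -> Rabs v <= M * (b - a).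
Proof.
  intros Hab H [p <-]. apply Rabs_le.
  destruct (RiemannInt_const_bound (l := - M) (u := M) p Hab); [| lra].
  intros x Hx. specialize (H x Hx). unfold Rabs in H. destruct (Rcase_abs (f x)); lra.
Qed.

Lemma RInt_val_abs_le_between f a b v M :
  (forall x, Rmin a b < x < Rmax a b -> Rabs (f x) <= M) ->
  RInt_val f a b v -> Rabs v <= M * Rabs (b - a).
Proof.
  intros H Hv. destruct (Rle_dec a b).
  - rewrite (Rabs_pos_eq (b - a)) by lra. apply (RInt_val_abs_le f a b); auto.
    intros x Hx; apply H. rewrite Rmin_left, Rmax_right; lra.
  - rewrite <- (Rabs_Ropp v), <- (Rabs_Ropp (b - a)), Ropp_minus_distr, (Rabs_pos_eq (a - b))
      by lra.
    apply (RInt_val_abs_le f b a); [lra | | apply RInt_val_swap; auto].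
    intros x Hx; apply H. rewrite Rmin_right, Rmax_left; lra.
Qed.

Lemma RInt_val_continuous f a b : (forall x, Rmin a b <= x <= Rmax a b -> continuity_pt f x) ->
  exists v, RInt_val f a b v.
Proof.
  intros H. destruct (Rle_dec a b).
  - rewrite Rmin_left, Rmax_right in H by lra.
    exists (RiemannInt (continuity_implies_RiemannInt r H)). apply RInt_val_RiemannInt.
  - rewrite Rmin_right, Rmax_left in H by lra.
    exists (RiemannInt (RiemannInt_P1
      (continuity_implies_RiemannInt (Rlt_le _ _ (Rnot_le_lt _ _ n)) H))).
    apply RInt_val_RiemannInt.
Qed.

Lemma RInt_val_FTC f F a b : a <= b -> (forall x, a <= x <= b -> continuity_pt f x) ->
  (forall x, a <= x <= b -> derivable_pt_lim F x (f x)) -> RInt_val f a b (F b - F a).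
Proof.
  intros Hab Hc HF.
  assert (HF' : antiderivative f F a b).
  { split; auto. intros x Hx. exists (exist _ (f x) (HF x Hx)). symmetry.
    apply derive_pt_eq_0. auto. }
  destruct (antiderivative_Ucte _ _ _ _ _ HF' (RiemannInt_P29 Hab Hc)) as [k Hk].
  exists (continuity_implies_RiemannInt Hab Hc).
  rewrite (RiemannInt_P20 Hab (FTC_P1 Hab Hc)), (Hk b), (Hk a) by lra. ring.
Qed.

Lemma RInt_val_lower_bound g a b c d v m : a <= c <= d -> d <= b ->
  (forall x, a < x < b -> 0 <= g x) -> (forall x, c < x < d -> m <= g x) ->
  RInt_val g a b v -> m * (d - c) <= v.
Proof.
  intros Hcd Hdb Hg0 Hgm Hv.
  destruct (RInt_val_split g a b c v Hv) as [u1 [w [H1 [Hw ->]]]]; [lra |].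
  destruct (RInt_val_split g c b d w Hw) as [u2 [u3 [H2 [H3 ->]]]]; [lra |].
  assert (0 <= u1) by (apply (RInt_val_le (fun _ => 0) g a c); auto; try lra;
    [intros; apply Hg0; lra | apply RInt_val_zero]).
  assert (0 <= u3) by (apply (RInt_val_le (fun _ => 0) g d b); auto; try lra;
    [intros; apply Hg0; lra | apply RInt_val_zero]).
  assert (m * (d - c) <= u2) by (apply (RInt_val_le (fun _ => m) g c d); auto; try lra;
    apply RInt_val_const).
  lra.
Qed.

Lemma integral_limit_right f a b V K : a < b -> RInt_val f a b V ->
  (forall u, a < u < b -> Rabs (f u) <= K) ->
  limit1_in (fun c => integral f a c) (fun c => a <= c <= b) V b.
Proof.
  intros Hab HV HK e He.
  assert (K0 : 0 <= K) by (eapply Rle_trans; [apply Rabs_pos | apply (HK ((a + b) / 2)); lra]).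
  exists (e / (K + 1)). split; [apply Rdiv_lt_0_compat; lra |].
  intros c [Hc Hcb]. simpl in *. unfold R_dist in *. rewrite Rabs_minus_sym, Rabs_pos_eq in Hcb by lra.
  destruct (RInt_val_split f a b c V HV Hc) as [u [w [Hu [Hw ->]]]].
  rewrite (integral_spec _ _ _ _ Hu). replace (u - (u + w)) with (- w) by ring. rewrite Rabs_Ropp.
  eapply Rle_lt_trans; [apply (RInt_val_abs_le f c b); auto; [lra | intros; apply HK; lra] |].
  apply Rle_lt_trans with (K * (e / (K + 1))); [apply Rmult_le_compat_l; lra |].
  apply Rmult_lt_reg_r with (K + 1); [lra |]. field_simplify; lra.
Qed.

Lemma limit1_in_const k D x0 : limit1_in (fun _ => k) D k x0.
Proof. exact (limit_free (fun _ => k) D x0 x0). Qed.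

Lemma continuity_pt_limit1_in f D x : continuity_pt f x -> (forall c, D c -> x <> c) ->
  limit1_in f D (f x) x.
Proof.
  intros Hf HD. apply (limit1_imp f (D_x no_cond x)); [| exact Hf].
  intros c Hc; split; [exact I | auto].
Qed.

Lemma adhDa_left_end a b : a < b -> adhDa (fun c => a < c < b) b.
Proof.
  intros Hab e He. exists (b - Rmin e (b - a) / 2).
  pose proof (Rmin_l e (b - a)). pose proof (Rmin_r e (b - a)).
  assert (0 < Rmin e (b - a)) by (apply Rmin_pos; lra).
  split; [lra |]. unfold Rdist. rewrite Rabs_left; lra.
Qed.

Lemma improper_int01_limit f I : improper_int01 f I ->
  limit1_in (fun c => integral f 0 c) (fun c => 0 < c < 1) I 1.
Proof.
  intros [Hex Hlim] e He. destruct (Hlim e He) as [d [Hd H]]. exists d. split; auto.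
  intros c [Hc Hcd]. simpl in *. unfold R_dist in *. rewrite Rabs_left in Hcd by lra.
  destruct (Hex c Hc) as [v Hv]. rewrite (integral_spec _ _ _ _ Hv). apply (H c v); auto. lra.
Qed.

Lemma Rabs_sub_lt_between t k u : Rmin t (t + k) < u < Rmax t (t + k) -> Rabs (u - t) < Rabs k.
Proof.
  unfold Rmin, Rmax. intros Hu. destruct (Rle_dec t (t + k)).
  - rewrite !Rabs_pos_eq; lra.
  - rewrite !Rabs_left; lra.
Qed.

Lemma RInt_val_abs_sub_const_le f t k v l M :
  (forall u, Rmin t (t + k) < u < Rmax t (t + k) -> Rabs (f u - l) <= M) ->
  RInt_val f t (t + k) v -> Rabs (v - l * k) <= M * Rabs k.
Proof.
  intros Hf Hv.
  pose proof (RInt_val_abs_le_between (fun u => f u - l) _ _ _ _ Hf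
    (RInt_val_minus _ _ _ _ _ _ Hv (RInt_val_const t (t + k) l))) as Hb.
  replace (t + k - t) with k in Hb by ring. exact Hb.
Qed.

Lemma derivable_pt_lim_integral_moving (F : R -> R -> R) a b t C d0 :
  a < t < b -> d0 > 0 -> 0 <= C ->
  (forall s u, a < s < b -> a < u < b -> continuity_pt (F s) u) ->
  (forall s u, a < s < b -> Rabs (s - t) < d0 -> a < u < b ->
     Rabs (F s u - F t u) <= C * Rabs (s - t)) ->
  derivable_pt_lim (fun s => integral (F s) t s) t (F t t).
Proof.
  intros Ht Hd0 HC Hcont Hlip e He.
  destruct (proj1 (continuity_pt_eps (F t) t) (Hcont t t Ht Ht) (e / 2) ltac:(lra))
    as [d1 [Hd1 HF1]].
  set (d := Rmin (Rmin d0 d1) (Rmin (Rmin (t - a) (b - t)) (e / (2 * (C + 1))))).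
  assert (Hd : 0 < d) by (repeat apply Rmin_pos; try apply Rdiv_lt_0_compat; lra).
  exists (mkposreal d Hd). intros k Hk0 Hk. simpl in Hk.
  apply Rmin_Rgt_l in Hk as [[Hk1 Hk2]%Rmin_Rgt_l [[Hk3 Hk4]%Rmin_Rgt_l Hk5]%Rmin_Rgt_l].
  pose proof (Rabs_def2 _ _ Hk3) as Hk3'. pose proof (Rabs_def2 _ _ Hk4) as Hk4'.
  assert (Hs : a < t + k < b) by lra.
  rewrite integral_same, Rminus_0_r.
  destruct (RInt_val_continuous (F (t + k)) t (t + k)) as [v Hv].
  { intros x Hx. apply Hcont; auto. unfold Rmin, Rmax in Hx. destruct (Rle_dec t (t + k)); lra. }
  rewrite (integral_spec _ _ _ _ Hv).
  assert (Hbound : Rabs (v - F t t * k) <= (C * Rabs k + e / 2) * Rabs k).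
  { apply (RInt_val_abs_sub_const_le (F (t + k)) t); auto. intros u Hu.
    pose proof (Rabs_sub_lt_between t k u Hu).
    assert (Hu01 : a < u < b) by (unfold Rmin, Rmax in Hu; destruct (Rle_dec t (t + k)); lra).
    replace (F (t + k) u - F t t) with ((F (t + k) u - F t u) + (F t u - F t t)) by ring.
    eapply Rle_trans; [apply Rabs_triang | apply Rplus_le_compat].
    - replace k with (t + k - t) at 2 by ring. apply Hlip; auto.
      replace (t + k - t) with k by ring. auto.
    - left. apply HF1. lra. }
  assert (HCk : C * Rabs k < e / 2).
  { apply Rle_lt_trans with (C * (e / (2 * (C + 1)))); [apply Rmult_le_compat_l; lra |].
    apply Rmult_lt_reg_r with (2 * (C + 1)); [lra |]. field_simplify; nra. }
  assert (Hk0' : 0 < Rabs k) by (apply Rabs_pos_lt; auto).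
  replace (v / k - F t t) with ((v - F t t * k) / k) by (field; auto).
  unfold Rdiv. rewrite Rabs_mult, Rabs_inv.
  apply Rmult_lt_reg_r with (Rabs k); auto. rewrite Rmult_assoc, Rinv_l by lra. nra.
Qed.

(** * Expansions in a monic orthogonal family *)

Section OrthogonalFamily.

Variables (Q : nat -> R -> R) (w : R -> R) (H : nat -> R) (a b : R).
Hypothesis Q_monic : forall n, monic_poly n (Q n).
Hypothesis Q_orth : forall i j, i <> j -> RInt_val (fun x => Q i x * Q j x * w x) a b 0.
Hypothesis Q_norm : forall i, RInt_val (fun x => Q i x * Q i x * w x) a b (H i).

Lemma deg_lt_span N q : deg_lt N q -> exists c, forall x, q x = sumR (fun j => c j * Q j x) N.
Proof.
  revert q. induction N as [|N IH]; intros q [c Hc].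
  - exists (fun _ => 0). intros x. rewrite Hc. reflexivity.
  - destruct (Q_monic N) as [d Hd].
    destruct (IH (fun x => q x - c N * Q N x)) as [e He].
    + exists (fun k => c k - c N * d k). intros x.
      replace (spoly (fun k => c k - c N * d k) N x) with (spoly c N x - c N * spoly d N x)
        by (rewrite spoly_scal, spoly_sub; reflexivity).
      rewrite Hc, Hd, spoly_S. unfold spoly. ring.
    + exists (fun j => if Nat.eqb j N then c N else e j). intros x. simpl.
      rewrite Nat.eqb_refl, (sumR_ext_lt _ (fun j => e j * Q j x)), <- He; [ring |].
      intros k Hk. destruct (Nat.eqb_spec k N); [lia | auto].
Qed.

Lemma RInt_val_span_Q N c k :
  RInt_val (fun x => sumR (fun j => c j * Q j x) N * Q k x * w x) a b
    (if Nat.ltb k N then c k * H k else 0).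
Proof.
  induction N as [|N IH]; simpl.
  - apply RInt_val_ext with (fun _ => 0); [intros; ring | apply RInt_val_zero].
  - replace (if Nat.ltb k (S N) then c k * H k else 0)
      with ((if Nat.ltb k N then c k * H k else 0) + c N * (if Nat.eqb N k then H k else 0)).
    + apply RInt_val_ext
        with (fun x => sumR (fun j => c j * Q j x) N * Q k x * w x + c N * (Q N x * Q k x * w x));
        [intros; ring |].
      apply RInt_val_plus, RInt_val_scal; auto.
      destruct (Nat.eqb_spec N k) as [<-|Hne]; auto.
    + destruct (Nat.ltb_spec k N), (Nat.ltb_spec k (S N)), (Nat.eqb_spec N k); try lia; subst; ring.
Qed.

Lemma RInt_val_deg_lt_Q N q k : deg_lt N q -> exists v, RInt_val (fun x => q x * Q k x * w x) a b v.
Proof.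
  intros Hq. destruct (deg_lt_span N q Hq) as [c Hc]. eexists.
  apply RInt_val_ext with (2 := RInt_val_span_Q N c k). intros x. rewrite Hc. auto.
Qed.

Lemma RInt_val_deg_lt_orth k q : deg_lt k q -> RInt_val (fun x => q x * Q k x * w x) a b 0.
Proof.
  intros Hq. destruct (deg_lt_span k q Hq) as [c Hc].
  replace 0 with (if Nat.ltb k k then c k * H k else 0) by (rewrite Nat.ltb_irrefl; auto).
  apply RInt_val_ext with (2 := RInt_val_span_Q k c k). intros x. rewrite Hc. auto.
Qed.

Lemma deg_lt_expansion (H_neq0 : forall j, H j <> 0) N q (v : nat -> R) : deg_lt N q ->
  (forall j, (j < N)%nat -> RInt_val (fun x => q x * Q j x * w x) a b (v j)) ->
  forall x, q x = sumR (fun j => v j / H j * Q j x) N.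
Proof.
  intros Hq Hv. destruct (deg_lt_span N q Hq) as [c Hc]. intros x. rewrite Hc.
  apply sumR_ext_lt. intros j Hj. f_equal.
  assert (Hvj : v j = c j * H j).
  { apply (RInt_val_unique (fun x => q x * Q j x * w x) a b); auto.
    replace (c j * H j) with (if Nat.ltb j N then c j * H j else 0)
      by (apply Nat.ltb_lt in Hj; rewrite Hj; auto).
    apply RInt_val_ext with (2 := RInt_val_span_Q N c j). intros y. rewrite Hc. auto. }
  rewrite Hvj. field. auto.
Qed.

End OrthogonalFamily.

(** * The weight *)

Definition rho (alpha beta u : R) : R := pw u alpha * pw (1 - u) beta.

Lemma wt_rho alpha beta A B t x : wt alpha beta A B t x = rho alpha beta x * (A + B * theta (x - t)).
Proof. reflexivity. Qed.

Lemma theta_neg x : x < 0 -> theta x = 0.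
Proof. unfold theta. destruct (Rlt_dec x 0); lra. Qed.

Lemma theta_nonneg x : 0 <= x -> theta x = 1.
Proof. unfold theta. destruct (Rlt_dec x 0); lra. Qed.

Lemma RInt_val_FTC_jump (F dF : R -> R) A B a s c : a <= s <= c ->
  (forall x, a <= x <= c -> continuity_pt dF x) ->
  (forall x, a <= x <= c -> derivable_pt_lim F x (dF x)) ->
  (exists v, RInt_val (fun u => dF u * (A + B * theta (u - s))) a c v) ->
  RInt_val (fun u => dF u * (A + B * theta (u - s))) a c (A * (F s - F a) + (A + B) * (F c - F s)).
Proof.
  intros Hs Hc HF [v Hv].
  assert (FTC : forall x y, a <= x <= y -> y <= c -> RInt_val dF x y (F y - F x))
    by (intros x y Hx Hy; apply RInt_val_FTC; [lra | intros; apply Hc | intros; apply HF]; lra).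
  destruct (RInt_val_split _ a c s v Hv Hs) as [u [w [Hu [Hw _]]]].
  apply RInt_val_chasles with s.
  - apply (RInt_val_ext_open (fun u => A * dF u)); [lra | | apply RInt_val_scal, FTC; lra | eauto].
    intros x Hx. rewrite theta_neg by lra. ring.
  - apply (RInt_val_ext_open (fun u => (A + B) * dF u)); [lra | | apply RInt_val_scal, FTC; lra | eauto].
    intros x Hx. rewrite theta_nonneg by lra. ring.
Qed.

Section Weight.

Variables alpha beta : R.
Hypothesis alpha_pos : alpha > 0.
Hypothesis beta_pos : beta > 0.

Lemma continuity_pt_rho u : 0 <= u <= 1 -> continuity_pt (rho alpha beta) u.
Proof.
  intros Hu. apply (continuity_pt_mult (fun u => pw u alpha) (fun u => pw (1 - u) beta)).
  - apply continuity_pt_pw; lra.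
  - apply continuity_pt_pw_1m; lra.
Qed.

Lemma rho_bounds u : 0 <= u <= 1 -> 0 <= rho alpha beta u <= 1.
Proof.
  intros Hu. unfold rho.
  pose proof (pw_ge0 u alpha). pose proof (pw_ge0 (1 - u) beta).
  pose proof (pw_le1 u alpha ltac:(lra) ltac:(lra)). pose proof (pw_le1 (1 - u) beta ltac:(lra) ltac:(lra)).
  split; [apply Rmult_le_pos; lra |].
  apply Rle_trans with (1 * 1); [apply Rmult_le_compat |]; lra.
Qed.

Lemma rho_pos u : 0 < u < 1 -> 0 < rho alpha beta u.
Proof. intros Hu. apply Rmult_lt_0_compat; apply pw_gt0; lra. Qed.

(* [u * rho u = u^(alpha+1) (1-u)^beta] is differentiable at [0] even when [alpha < 1]. *)
Lemma derivable_pt_lim_x_rho u : u < 1 ->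
  derivable_pt_lim (fun u => u * rho alpha beta u) u
    ((alpha + 1) * rho alpha beta u - beta * (u * rho alpha beta u) / (1 - u)).
Proof.
  intros Hu. unfold rho.
  apply (derivable_pt_lim_ext (fun u => pw u (alpha + 1) * pw (1 - u) beta));
    [intros; rewrite pw_succ; ring |].
  replace ((alpha + 1) * (pw u alpha * pw (1 - u) beta)
      - beta * (u * (pw u alpha * pw (1 - u) beta)) / (1 - u))
    with ((alpha + 1) * pw u (alpha + 1 - 1) * pw (1 - u) beta
      + pw u (alpha + 1) * - (beta * pw (1 - u) (beta - 1))).
  - apply (derivable_pt_lim_mult (fun u => pw u (alpha + 1)) (fun u => pw (1 - u) beta)).
    + apply derivable_pt_lim_pw. lra.
    + apply derivable_pt_lim_pw_1m. auto.
  - replace (alpha + 1 - 1) with alpha by ring.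
    replace (pw (1 - u) beta) with ((1 - u) * pw (1 - u) (beta - 1))
      by (rewrite <- pw_succ; f_equal; ring).
    rewrite pw_succ. field. lra.
Qed.

Lemma rho_at_1 : rho alpha beta 1 = 0.
Proof. unfold rho. rewrite Rminus_diag, (pw_nonpos 0) by lra. ring. Qed.

Lemma wt_abs_le A B t u : 0 <= u <= 1 -> Rabs (wt alpha beta A B t u) <= Rabs A + Rabs B.
Proof.
  intros Hu. rewrite wt_rho, Rabs_mult.
  pose proof (rho_bounds u Hu). rewrite (Rabs_pos_eq (rho alpha beta u)) by lra.
  assert (Rabs (A + B * theta (u - t)) <= Rabs A + Rabs B).
  { eapply Rle_trans; [apply Rabs_triang |]. rewrite Rabs_mult.
    assert (Rabs (theta (u - t)) <= 1)
      by (unfold theta; destruct (Rlt_dec (u - t) 0); rewrite ?Rabs_R0, ?Rabs_R1; lra).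
    pose proof (Rabs_pos B). nra. }
  pose proof (Rabs_pos (A + B * theta (u - t))). nra.
Qed.

Lemma continuous_times_wt_bounded A B t g : (forall u, 0 <= u <= 1 -> continuity_pt g u) ->
  exists K, forall u, 0 < u < 1 -> Rabs (g u * wt alpha beta A B t u) <= K.
Proof.
  intros Hg. destruct (continuous_bounded g 0 1 ltac:(lra) Hg) as [M HM].
  exists (M * (Rabs A + Rabs B)). intros u Hu. rewrite Rabs_mult.
  apply Rmult_le_compat; try apply Rabs_pos; [apply HM | apply wt_abs_le]; lra.
Qed.

(* The bracket is the derivative of [G u * (u * rho u)]: this is the integration by parts
   behind [y_n]. *)
Lemma wt_div_1m_decomposition A B s G dG u : u < 1 ->
  beta * (G / (1 - u) * wt alpha beta A B s u) =
  (beta + alpha + 1) * (G * wt alpha beta A B s u) + (u * dG) * wt alpha beta A B s u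
  - (dG * (u * rho alpha beta u)
     + G * ((alpha + 1) * rho alpha beta u - beta * (u * rho alpha beta u) / (1 - u)))
    * (A + B * theta (u - s)).
Proof. intros Hu. rewrite wt_rho. field. lra. Qed.

Lemma continuity_pt_x_rho_deriv u : 0 <= u < 1 ->
  continuity_pt (fun u => (alpha + 1) * rho alpha beta u - beta * (u * rho alpha beta u) / (1 - u)) u.
Proof.
  intros Hu. assert (Hr : continuity_pt (rho alpha beta) u) by (apply continuity_pt_rho; lra).
  apply continuity_pt_minus; [apply continuity_pt_scal; auto |].
  apply continuity_pt_div; [| | lra].
  - apply continuity_pt_scal, continuity_pt_mult; auto. apply derivable_continuous_pt, derivable_pt_id.
  - apply derivable_continuous_pt, derivable_pt_minus; [apply derivable_pt_const | apply derivable_pt_id].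
Qed.

Lemma RInt_val_div_1m_by_parts A B s c G dG v1 v2 v : 0 < s < c -> c < 1 ->
  (forall u, derivable_pt_lim G u (dG u)) -> (forall u, continuity_pt dG u) ->
  RInt_val (fun u => G u * wt alpha beta A B s u) 0 c v1 ->
  RInt_val (fun u => u * dG u * wt alpha beta A B s u) 0 c v2 ->
  RInt_val (fun u => G u / (1 - u) * wt alpha beta A B s u) 0 c v ->
  beta * v = (beta + alpha + 1) * v1 + v2
    - (A * (G s * (s * rho alpha beta s))
       + (A + B) * (G c * (c * rho alpha beta c) - G s * (s * rho alpha beta s))).
Proof.
  intros Hs Hc HG HdG Hv1 Hv2 Hv.
  set (dxr := fun u => (alpha + 1) * rho alpha beta u - beta * (u * rho alpha beta u) / (1 - u)).
  set (dGg := fun u => dG u * (u * rho alpha beta u) + G u * dxr u).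
  assert (HGg : forall u, 0 <= u <= c ->
    derivable_pt_lim (fun u => G u * (u * rho alpha beta u)) u (dGg u)).
  { intros u Hu. apply (derivable_pt_lim_mult G (fun u => u * rho alpha beta u)); auto.
    apply derivable_pt_lim_x_rho. lra. }
  assert (HdGg : forall u, 0 <= u <= c -> continuity_pt dGg u).
  { intros u Hu. apply continuity_pt_plus; apply continuity_pt_mult; auto.
    - apply continuity_pt_mult; [apply derivable_continuous_pt, derivable_pt_id |].
      apply continuity_pt_rho; lra.
    - apply derivable_continuous_pt. exists (dG u). apply HG.
    - apply continuity_pt_x_rho_deriv. lra. }
  assert (Hcomb : RInt_val (fun u => dGg u * (A + B * theta (u - s))) 0 c
    ((beta + alpha + 1) * v1 + 1 * v2 + (- beta) * v)).
  { apply RInt_val_ext_on with (fun u => ((beta + alpha + 1) * (G u * wt alpha beta A B s u)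
      + 1 * (u * dG u * wt alpha beta A B s u))
      + (- beta) * (G u / (1 - u) * wt alpha beta A B s u));
      [lra | | apply RInt_val_lin; [apply RInt_val_lin; [apply RInt_val_scal |] |]; auto].
    intros u Hu. pose proof (wt_div_1m_decomposition A B s (G u) (dG u) u ltac:(lra)).
    unfold dGg, dxr. lra. }
  assert (E := RInt_val_FTC_jump _ _ A B 0 s c ltac:(lra) HdGg HGg ltac:(eauto)).
  pose proof (RInt_val_unique _ _ _ _ _ Hcomb E) as Heq. cbv beta in Heq.
  rewrite Rmult_0_l, Rmult_0_r in Heq. lra.
Qed.

(* The boundary term [G c * (c * rho c)] vanishes as [c -> 1] because [beta > 0]. *)
Lemma beta_improper_by_parts A B s G dG V1 V2 I : 0 < s < 1 ->
  (forall u, derivable_pt_lim G u (dG u)) -> (forall u, continuity_pt dG u) ->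
  RInt_val (fun u => G u * wt alpha beta A B s u) 0 1 V1 ->
  RInt_val (fun u => u * dG u * wt alpha beta A B s u) 0 1 V2 ->
  improper_int01 (fun u => G u / (1 - u) * wt alpha beta A B s u) I ->
  beta * I = (beta + alpha + 1) * V1 + V2 + B * (G s * (s * rho alpha beta s)).
Proof.
  intros Hs HG HdG HV1 HV2 HI.
  set (Gr := fun u => G u * (u * rho alpha beta u)).
  set (D := fun c => s < c < 1).
  assert (HGc : forall u, continuity_pt G u)
    by (intros u; apply derivable_continuous_pt; exists (dG u); apply HG).
  destruct (continuous_times_wt_bounded A B s G) as [K1 HK1]; [auto |].
  destruct (continuous_times_wt_bounded A B s (fun u => u * dG u)) as [K2 HK2].
  { intros. apply continuity_pt_mult; [apply derivable_continuous_pt, derivable_pt_id | auto]. }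
  assert (Hsub : forall c, D c -> 0 <= c <= 1) by (unfold D; intros; lra).
  assert (L1 := limit1_imp _ _ D _ _ Hsub (integral_limit_right _ 0 1 _ K1 ltac:(lra) HV1 HK1)).
  assert (L2 := limit1_imp _ _ D _ _ Hsub (integral_limit_right _ 0 1 _ K2 ltac:(lra) HV2 HK2)).
  assert (L3 : limit1_in Gr D 0 1).
  { replace 0 with (Gr 1) by (unfold Gr; rewrite rho_at_1; ring).
    apply continuity_pt_limit1_in; [| unfold D; intros; lra].
    apply continuity_pt_mult; auto. apply continuity_pt_mult;
      [apply derivable_continuous_pt, derivable_pt_id | apply continuity_pt_rho; lra]. }
  assert (L0 := limit1_imp _ (fun c => 0 < c < 1) D _ _ ltac:(unfold D; intros; lra)
    (improper_int01_limit _ _ HI)).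
  set (rhs := fun c => (beta + alpha + 1) * integral (fun u => G u * wt alpha beta A B s u) 0 c
    + integral (fun u => u * dG u * wt alpha beta A B s u) 0 c - (A * Gr s + (A + B) * (Gr c - Gr s))).
  assert (Htrunc : forall c, D c ->
    rhs c = beta * integral (fun u => G u / (1 - u) * wt alpha beta A B s u) 0 c).
  { intros c Hc. unfold D in Hc. destruct HI as [Hex _].
    destruct (RInt_val_sub _ 0 1 0 c _ HV1) as [v1 Hv1]; try lra.
    destruct (RInt_val_sub _ 0 1 0 c _ HV2) as [v2 Hv2]; try lra.
    destruct (Hex c ltac:(lra)) as [v Hv]. unfold rhs, Gr.
    rewrite (integral_spec _ _ _ _ Hv1), (integral_spec _ _ _ _ Hv2), (integral_spec _ _ _ _ Hv).
    symmetry. apply (RInt_val_div_1m_by_parts A B s c G dG); auto; lra. }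
  apply (single_limit _ D _ _ 1 (adhDa_left_end s 1 ltac:(lra))
    (limit_mul _ _ D _ _ 1 (limit1_in_const beta D 1) L0)).
  apply (limit1_ext rhs); [exact Htrunc |].
  replace ((beta + alpha + 1) * V1 + V2 + B * (G s * (s * rho alpha beta s)))
    with ((beta + alpha + 1) * V1 + V2 - (A * Gr s + (A + B) * (0 - Gr s))) by (unfold Gr; ring).
  apply limit_minus; [apply limit_plus; [apply limit_mul; [apply limit1_in_const |] |] |]; auto.
  apply limit_plus; [apply limit1_in_const |].
  apply limit_mul; [apply limit1_in_const |]. apply limit_minus; [auto | apply limit1_in_const].
Qed.

Lemma wt_sub_le A B f s t vs vt : 0 < s -> s <= t -> t < 1 ->
  (forall x, continuity_pt f x) ->
  RInt_val (fun x => f x * wt alpha beta A B s x) 0 1 vs ->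
  RInt_val (fun x => f x * wt alpha beta A B t x) 0 1 vt ->
  vs - vt = B * integral (fun u => f u * rho alpha beta u) s t.
Proof.
  intros Hs Hst Ht Hf Hvs Hvt.
  set (g := fun x => f x * wt alpha beta A B s x - f x * wt alpha beta A B t x).
  destruct (RInt_val_split g 0 1 s (vs - vt)) as [u1 [w [H1 [Hw E1]]]];
    [apply RInt_val_minus; auto | lra |].
  destruct (RInt_val_split g s 1 t w Hw) as [u2 [u3 [H2 [H3 E2]]]]; [lra |].
  assert (Z1 : u1 = 0).
  { apply (RInt_val_unique g 0 s); auto.
    apply (RInt_val_ext_open (fun _ => 0)); [lra | | apply RInt_val_zero | eauto].
    intros x Hx. unfold g. rewrite !wt_rho, !theta_neg by lra. ring. }
  assert (Z3 : u3 = 0).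
  { apply (RInt_val_unique g t 1); auto.
    apply (RInt_val_ext_open (fun _ => 0)); [lra | | apply RInt_val_zero | eauto].
    intros x Hx. unfold g. rewrite !wt_rho, !theta_nonneg by lra. ring. }
  destruct (RInt_val_continuous (fun u => f u * rho alpha beta u) s t) as [v Hv].
  { intros x Hx. rewrite Rmin_left, Rmax_right in Hx by lra.
    apply continuity_pt_mult; auto. apply continuity_pt_rho; lra. }
  rewrite (integral_spec _ _ _ _ Hv).
  assert (Z2 : u2 = B * v).
  { apply (RInt_val_unique g s t); auto.
    apply (RInt_val_ext_open (fun x => B * (f x * rho alpha beta x)));
      [lra | | apply RInt_val_scal; auto | eauto].
    intros x Hx. unfold g. rewrite !wt_rho, theta_nonneg, theta_neg by lra. ring. }
  lra.
Qed.

Lemma wt_sub A B f s t vs vt : 0 < s < 1 -> 0 < t < 1 ->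
  (forall x, continuity_pt f x) ->
  RInt_val (fun x => f x * wt alpha beta A B s x) 0 1 vs ->
  RInt_val (fun x => f x * wt alpha beta A B t x) 0 1 vt ->
  vs - vt = B * integral (fun u => f u * rho alpha beta u) s t.
Proof.
  intros Hs Ht Hf Hvs Hvt. destruct (Rle_dec s t).
  - apply (wt_sub_le A B); auto; lra.
  - rewrite integral_swap.
    + pose proof (wt_sub_le A B f t s vt vs ltac:(lra) ltac:(lra) ltac:(lra) Hf Hvt Hvs). lra.
    + apply RInt_val_continuous. intros x Hx. apply continuity_pt_mult; auto.
      apply continuity_pt_rho. unfold Rmin, Rmax in Hx. destruct (Rle_dec s t); lra.
Qed.

Lemma wt_eq_multiple_rho A B t : A >= 0 -> A + B >= 0 -> ~ (A = 0 /\ B = 0) -> 0 < t < 1 ->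
  exists c d k, 0 <= c < d /\ d <= 1 /\ k > 0 /\
    forall x, c <= x < d -> wt alpha beta A B t x = k * rho alpha beta x.
Proof.
  intros HA HAB HnAB Ht. destruct (Rle_lt_dec A 0).
  - exists t, 1, (A + B). repeat split; try lra.
    intros x Hx. rewrite wt_rho, theta_nonneg by lra. ring.
  - exists 0, t, A. repeat split; try lra.
    intros x Hx. rewrite wt_rho, theta_neg by lra. ring.
Qed.

Lemma RInt_val_sq_wt_pos A B t n q v : A >= 0 -> A + B >= 0 -> ~ (A = 0 /\ B = 0) ->
  0 < t < 1 -> monic_poly n q ->
  RInt_val (fun x => q x * q x * wt alpha beta A B t x) 0 1 v -> v > 0.
Proof.
  intros HA HAB HnAB Ht Hq Hv.
  destruct (wt_eq_multiple_rho A B t HA HAB HnAB Ht) as [c [d [k [Hcd [Hd1 [Hk Hw]]]]]].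
  destruct (monic_nonzero_at n q c d ltac:(lra) Hq) as [x0 [Hx0 Hqx0]].
  set (F := fun x => q x * q x * (k * rho alpha beta x)).
  assert (HF0 : F x0 > 0).
  { unfold F. pose proof (rho_pos x0 ltac:(lra)).
    assert (0 < q x0 * q x0) by (destruct (Rlt_dec (q x0) 0); nra).
    apply Rmult_lt_0_compat; [| apply Rmult_lt_0_compat]; auto. }
  assert (HFc : continuity_pt F x0).
  { apply continuity_pt_mult; [| apply continuity_pt_scal, continuity_pt_rho; lra].
    apply continuity_pt_mult; apply (continuity_pt_deg_lt (S n)), monic_deg_lt; auto. }
  destruct (proj1 (continuity_pt_eps F x0) HFc (F x0 / 2) ltac:(lra)) as [e0 [He0 HFe]].
  set (e := Rmin e0 (Rmin (x0 - c) (d - x0)) / 2).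
  assert (He : 0 < e) by (apply Rdiv_lt_0_compat; [repeat apply Rmin_pos |]; lra).
  assert (e < e0 /\ e < x0 - c /\ e < d - x0) as [He1 [He2 He3]].
  { pose proof (Rmin_l e0 (Rmin (x0 - c) (d - x0))). pose proof (Rmin_r e0 (Rmin (x0 - c) (d - x0))).
    pose proof (Rmin_l (x0 - c) (d - x0)). pose proof (Rmin_r (x0 - c) (d - x0)). unfold e. lra. }
  assert (Hlow := RInt_val_lower_bound (fun x => q x * q x * wt alpha beta A B t x)
    0 1 (x0 - e) (x0 + e) v (F x0 / 2) ltac:(lra) ltac:(lra)).
  enough (F x0 / 2 * (x0 + e - (x0 - e)) <= v) by nra.
  apply Hlow; auto.
  - intros x Hx. rewrite wt_rho. apply Rmult_le_pos; [destruct (Rle_dec 0 (q x)); nra |].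
    apply Rmult_le_pos; [apply rho_bounds; lra |].
    unfold theta. destruct (Rlt_dec (x - t) 0); lra.
  - intros x Hx. rewrite Hw by lra. fold (F x).
    assert (Hy : Rabs (x - x0) < e0) by (apply Rabs_def1; lra).
    specialize (HFe x Hy). apply Rabs_def2 in HFe. lra.
Qed.

End Weight.

(** * Orthogonal polynomials for the weight with a moving jump *)

Section MovingJump.

Variables (alpha beta A B : R) (P : nat -> R -> R -> R) (h : nat -> R -> R).
Hypothesis alpha_pos : alpha > 0.
Hypothesis beta_pos : beta > 0.
Hypothesis A_ge0 : A >= 0.
Hypothesis AB_ge0 : A + B >= 0.
Hypothesis AB_nz : ~ (A = 0 /\ B = 0).
Hypothesis P_monic : forall n t, 0 < t < 1 -> monic_poly n (P n t).
Hypothesis P_orth : forall i j t, 0 < t < 1 -> i <> j ->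
  RInt_val (fun x => P i t x * P j t x * wt alpha beta A B t x) 0 1 0.
Hypothesis P_norm : forall i t, 0 < t < 1 ->
  RInt_val (fun x => P i t x * P i t x * wt alpha beta A B t x) 0 1 (h i t).

Local Notation w := (wt alpha beta A B).
Local Notation rho := (rho alpha beta).

Lemma h_pos n t : 0 < t < 1 -> h n t > 0.
Proof.
  intros Ht. apply (RInt_val_sq_wt_pos alpha beta alpha_pos beta_pos A B t n (P n t)); auto.
Qed.

Lemma h_neq0 n t : 0 < t < 1 -> h n t <> 0.
Proof. intros Ht. pose proof (h_pos n t Ht). lra. Qed.

Lemma deg_lt_P j N t : 0 < t < 1 -> (j < N)%nat -> deg_lt N (P j t).
Proof. intros Ht Hj. apply deg_lt_le with (S j); [lia | apply monic_deg_lt; auto]. Qed.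

Lemma continuity_pt_P j t x : 0 < t < 1 -> continuity_pt (P j t) x.
Proof. intros Ht. apply (continuity_pt_deg_lt (S j)), deg_lt_P; auto. Qed.

Lemma continuity_pt_P_P_rho n j s t u : 0 < s < 1 -> 0 < t < 1 -> 0 <= u <= 1 ->
  continuity_pt (fun u => P n s u * P j t u * rho u) u.
Proof.
  intros Hs Ht Hu. apply continuity_pt_mult; [apply continuity_pt_mult |];
    [apply continuity_pt_P; auto .. | apply continuity_pt_rho; auto].
Qed.

Lemma integrable_P_P_rho n j s t a b : 0 < s < 1 -> 0 < t < 1 -> 0 < a < 1 -> 0 < b < 1 ->
  exists v, RInt_val (fun u => P n s u * P j t u * rho u) a b v.
Proof.
  intros Hs Ht Ha Hb. apply RInt_val_continuous. intros x Hx. apply continuity_pt_P_P_rho; auto.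
  unfold Rmin, Rmax in Hx. destruct (Rle_dec a b); lra.
Qed.

Lemma RInt_val_P_orth_deg_lt k q t : 0 < t < 1 -> deg_lt k q ->
  RInt_val (fun x => q x * P k t x * w t x) 0 1 0.
Proof.
  intros Ht. apply (RInt_val_deg_lt_orth (fun k => P k t) (w t) (fun k => h k t));
    intros; auto.
Qed.

Lemma RInt_val_P_deg_lt N q k t : 0 < t < 1 -> deg_lt N q ->
  exists v, RInt_val (fun x => q x * P k t x * w t x) 0 1 v.
Proof.
  intros Ht. apply (RInt_val_deg_lt_Q (fun k => P k t) (w t) (fun k => h k t));
    intros; auto.
Qed.

(** [shift_coef n t s j] is the coefficient of [P_j(.;t)] in [P_n(.;s) - P_n(.;t)]. *)
Definition shift_coef (n : nat) (t s : R) (j : nat) : R :=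
  B * integral (fun u => P n s u * P j t u * rho u) t s / h j t.

Lemma RInt_val_P_sub_P n j s t : 0 < s < 1 -> 0 < t < 1 -> (j < n)%nat ->
  RInt_val (fun x => (P n s x - P n t x) * P j t x * w t x) 0 1
    (B * integral (fun u => P n s u * P j t u * rho u) t s).
Proof.
  intros Hs Ht Hj.
  destruct (RInt_val_P_deg_lt (S n) (P n s) j t) as [vt Hvt]; [auto | apply deg_lt_P; auto |].
  assert (H0s : RInt_val (fun x => P n s x * P j t x * w s x) 0 1 0).
  { apply RInt_val_ext with (fun x => P j t x * P n s x * w s x); [intros; ring |].
    apply RInt_val_P_orth_deg_lt; auto. apply deg_lt_P; auto. }
  assert (E := wt_sub alpha beta alpha_pos beta_pos A B (fun x => P n s x * P j t x) t s vt 0 Ht Hs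
    ltac:(intros; apply continuity_pt_mult; apply continuity_pt_P; auto)
    ltac:(apply RInt_val_ext with (2 := Hvt); intros; ring)
    ltac:(apply RInt_val_ext with (2 := H0s); intros; ring)).
  rewrite Rminus_0_r in E. rewrite <- E, <- (Rminus_0_r vt).
  apply RInt_val_ext with (fun x => P n s x * P j t x * w t x - P n t x * P j t x * w t x);
    [intros; ring |].
  apply RInt_val_minus; [auto | apply P_orth; auto; lia].
Qed.

Lemma P_sub_expansion n s t x : 0 < s < 1 -> 0 < t < 1 ->
  P n s x - P n t x = sumR (fun j => shift_coef n t s j * P j t x) n.
Proof.
  intros Hs Ht. unfold shift_coef.
  apply (deg_lt_expansion (fun k => P k t) (w t) (fun k => h k t) 0 1)
    with (q := fun x => P n s x - P n t x); intros; auto.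
  - apply h_neq0; auto.
  - apply monic_sub_deg_lt; auto.
  - apply RInt_val_P_sub_P; auto.
Qed.

Lemma h_sub m s t : 0 < s < 1 -> 0 < t < 1 ->
  h m s - h m t = - B * integral (fun u => P m s u * P m t u * rho u) t s.
Proof.
  intros Hs Ht.
  assert (Dg : deg_lt m (fun x => P m s x - P m t x)) by (apply monic_sub_deg_lt; auto).
  assert (Vs : RInt_val (fun x => (P m s x * P m t x) * w s x) 0 1 (h m s - 0)).
  { apply RInt_val_ext with (fun x => P m s x * P m s x * w s x - (P m s x - P m t x) * P m s x * w s x);
      [intros; ring |].
    apply RInt_val_minus; [auto | apply RInt_val_P_orth_deg_lt; auto]. }
  assert (Vt : RInt_val (fun x => (P m s x * P m t x) * w t x) 0 1 (h m t + 0)).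
  { apply RInt_val_ext with (fun x => P m t x * P m t x * w t x + (P m s x - P m t x) * P m t x * w t x);
      [intros; ring |].
    apply RInt_val_plus; [auto | apply RInt_val_P_orth_deg_lt; auto]. }
  pose proof (wt_sub alpha beta alpha_pos beta_pos A B (fun x => P m s x * P m t x) t s _ _ Ht Hs
    ltac:(intros; apply continuity_pt_mult; apply continuity_pt_P; auto) Vt Vs).
  lra.
Qed.

Lemma shift_coef_abs_le n j s t Ms M : 0 < s < 1 -> 0 < t < 1 ->
  (forall u, 0 <= u <= 1 -> Rabs (P n s u) <= Ms) -> (forall u, 0 <= u <= 1 -> Rabs (P j t u) <= M) ->
  Rabs (shift_coef n t s j) <= Rabs B * (Ms * M * Rabs (s - t)) / h j t.
Proof.
  intros Hs Ht HMs HM. pose proof (h_pos j t Ht) as Hh.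
  unfold shift_coef, Rdiv. rewrite !Rabs_mult, (Rabs_pos_eq (/ h j t))
    by (left; apply Rinv_0_lt_compat; auto).
  apply Rmult_le_compat_r; [left; apply Rinv_0_lt_compat; auto |].
  apply Rmult_le_compat_l; [apply Rabs_pos |].
  destruct (integrable_P_P_rho n j s t t s) as [v Hv]; auto.
  rewrite (integral_spec _ _ _ _ Hv), <- (Rmult_1_r (Ms * M)).
  apply (RInt_val_abs_le_between _ _ _ _ _) with (2 := Hv).
  intros u Hu. assert (Hu01 : 0 <= u <= 1) by (unfold Rmin, Rmax in Hu; destruct (Rle_dec t s); lra).
  rewrite !Rabs_mult, (Rabs_pos_eq (rho u)) by (apply rho_bounds; auto).
  pose proof (rho_bounds alpha beta alpha_pos beta_pos u Hu01).
  pose proof (HMs u Hu01). pose proof (HM u Hu01).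
  pose proof (Rabs_pos (P n s u)). pose proof (Rabs_pos (P j t u)).
  apply Rmult_le_compat; try nra.
Qed.

Lemma P_lipschitz n t : 0 < t < 1 ->
  exists C d, 0 <= C /\ d > 0 /\ forall s u, 0 < s < 1 -> Rabs (s - t) < d -> 0 <= u <= 1 ->
    Rabs (P n s u - P n t u) <= C * Rabs (s - t).
Proof.
  intros Ht.
  destruct (bounded_family (fun k => P k t)
    (fun k => deg_lt_bounded _ _ (monic_deg_lt _ _ (P_monic k t Ht))) n) as [M HM].
  assert (M0 : 0 <= M) by (eapply Rle_trans; [apply Rabs_pos | apply (HM 0%nat 0); lia || lra]).
  set (K := Rabs B * M * M * sumR (fun j => / h j t) n).
  assert (K0 : 0 <= K).
  { repeat apply Rmult_le_pos; try apply Rabs_pos; auto.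
    apply sumR_ge0. intros j. left. apply Rinv_0_lt_compat, h_pos; auto. }
  exists (2 * K * M), (/ (2 * K + 1)). split; [nra |]. split; [apply Rlt_gt, Rinv_0_lt_compat; lra |].
  intros s u Hs Hst Hu.
  set (S := sumR (fun j => Rabs (shift_coef n t s j)) n).
  assert (S0 : 0 <= S) by (apply sumR_ge0; intros; apply Rabs_pos).
  assert (Hdiff : forall u, 0 <= u <= 1 -> Rabs (P n s u - P n t u) <= M * S).
  { intros v Hv. rewrite P_sub_expansion by auto. eapply Rle_trans; [apply sumR_abs |].
    unfold S. rewrite <- sumR_scal. apply sumR_le. intros j Hj. rewrite Rabs_mult, Rmult_comm.
    apply Rmult_le_compat_r; [apply Rabs_pos | apply HM; auto; lia]. }
  assert (HS : S <= K * (1 + S) * Rabs (s - t)).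
  { apply Rle_trans with (sumR (fun j => Rabs B * ((M + M * S) * M * Rabs (s - t)) / h j t) n).
    - apply sumR_le. intros j Hj. apply shift_coef_abs_le; auto; [| intros; apply HM; auto; lia].
      intros v Hv. replace (P n s v) with (P n t v + (P n s v - P n t v)) by ring.
      eapply Rle_trans; [apply Rabs_triang | apply Rplus_le_compat; auto].
    - unfold K, Rdiv. rewrite sumR_scal. right. ring. }
  assert (K * Rabs (s - t) <= / 2).
  { apply Rle_trans with (K * / (2 * K + 1)); [apply Rmult_le_compat_l; lra |].
    apply Rmult_le_reg_l with (2 * (2 * K + 1)); [lra |]. field_simplify; lra. }
  assert (S <= 2 * K * Rabs (s - t)) by nra.
  eapply Rle_trans; [apply Hdiff; auto |]. pose proof (Rabs_pos (s - t)). nra.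
Qed.

Lemma derivable_pt_lim_integral_P_P_rho n j t : 0 < t < 1 ->
  derivable_pt_lim (fun s => integral (fun u => P n s u * P j t u * rho u) t s) t
    (P n t t * P j t t * rho t).
Proof.
  intros Ht. destruct (P_lipschitz n t Ht) as [C [d [HC [Hd Hlip]]]].
  destruct (deg_lt_bounded _ _ (monic_deg_lt _ _ (P_monic j t Ht))) as [M HM].
  assert (M0 : 0 <= M) by (eapply Rle_trans; [apply Rabs_pos | apply (HM 0); lra]).
  apply (derivable_pt_lim_integral_moving (fun s u => P n s u * P j t u * rho u) 0 1 t (C * M) d);
    auto; [apply Rmult_le_pos; auto | |].
  - intros s u Hs Hu. apply continuity_pt_P_P_rho; auto; lra.
  - intros s u Hs Hst Hu.
    replace (P n s u * P j t u * rho u - P n t u * P j t u * rho u)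
      with ((P n s u - P n t u) * P j t u * rho u) by ring.
    pose proof (rho_bounds alpha beta alpha_pos beta_pos u ltac:(lra)).
    rewrite !Rabs_mult, (Rabs_pos_eq (rho u)) by lra.
    pose proof (Hlip s u Hs Hst ltac:(lra)). pose proof (HM u ltac:(lra)).
    pose proof (Rabs_pos (P n s u - P n t u)). pose proof (Rabs_pos (P j t u)).
    pose proof (Rabs_pos (s - t)).
    apply Rle_trans with (C * Rabs (s - t) * M * 1); [| lra].
    apply Rmult_le_compat; nra.
Qed.

Lemma derivable_pt_lim_shift_coef n j t : 0 < t < 1 ->
  derivable_pt_lim (fun s => shift_coef n t s j) t (B * (P n t t * P j t t * rho t) / h j t).
Proof.
  intros Ht. unfold shift_coef, Rdiv.
  apply (derivable_pt_lim_ext (fun s => (B * / h j t) * integral (fun u => P n s u * P j t u * rho u) t s));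
    [intros; ring |].
  replace (B * (P n t t * P j t t * rho t) * / h j t) with ((B * / h j t) * (P n t t * P j t t * rho t))
    by ring.
  apply derivable_pt_lim_scal, derivable_pt_lim_integral_P_P_rho; auto.
Qed.

Lemma derivable_pt_h m t : 0 < t < 1 -> derivable_pt (h m) t.
Proof.
  intros Ht.
  apply (derivable_pt_locally_ext _ (fun s => h m t + - B * integral (fun u => P m s u * P m t u * rho u) t s)
    t 0 1 Ht).
  - intros s Hs. pose proof (h_sub m s t Hs Ht). lra.
  - apply derivable_pt_plus; [apply derivable_pt_const |].
    apply derivable_pt_scal. exists (P m t t * P m t t * rho t).
    apply derivable_pt_lim_integral_P_P_rho; auto.
Qed.

Lemma derivable_pt_P_diag n t : 0 < t < 1 -> derivable_pt (fun s => P n s s) t.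
Proof.
  intros Ht.
  apply (derivable_pt_locally_ext _ (fun s => P n t s + sumR (fun j => shift_coef n t s j * P j t s) n)
    t 0 1 Ht).
  - intros s Hs. pose proof (P_sub_expansion n s t s Hs Ht). lra.
  - apply derivable_pt_plus; [apply (derivable_pt_deg_lt (S n)), deg_lt_P; auto |].
    apply derivable_pt_sumR. intros j Hj. apply derivable_pt_mult.
    + exists (B * (P n t t * P j t t * rho t) / h j t). apply derivable_pt_lim_shift_coef; auto.
    + apply (derivable_pt_deg_lt (S j)), deg_lt_P; auto.
Qed.

Lemma derivable_pt_r n t : 0 < t < 1 -> derivable_pt (r_fun alpha beta B P h n) t.
Proof.
  intros Ht. destruct n as [|m]; [apply derivable_pt_const |].
  change (derivable_pt (fun s => B * pw s alpha * pw (1 - s) beta * P (S m) s s * P m s s * / h m s) t).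
  repeat apply derivable_pt_mult.
  - apply derivable_pt_const.
  - exists (alpha * pw t (alpha - 1)). apply derivable_pt_lim_pw_pos. lra.
  - exists (- (beta * pw (1 - t) (beta - 1))). apply derivable_pt_lim_pw_1m. lra.
  - apply derivable_pt_P_diag; auto.
  - apply derivable_pt_P_diag; auto.
  - apply derivable_pt_inv; [apply h_neq0 | apply derivable_pt_h]; auto.
Qed.

Lemma subleading_coef_shift m s t cs ct : 0 < s < 1 -> 0 < t < 1 ->
  (forall x, P (S m) s x = x ^ S m + spoly cs (S m) x) ->
  (forall x, P (S m) t x = x ^ S m + spoly ct (S m) x) ->
  cs m = ct m + shift_coef (S m) t s m.
Proof.
  intros Hs Ht Hcs Hct. destruct (P_monic m t Ht) as [d Hd].
  enough (E : (fun k => cs k - ct k) m = shift_coef (S m) t s m) by (cbv beta in E; lra).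
  apply (spoly_top_coef 0 1 m (fun k => cs k - ct k)
    (fun x => shift_coef (S m) t s m * spoly d m x + sumR (fun j => shift_coef (S m) t s j * P j t x) m));
    [lra | |].
  - apply deg_lt_plus; [apply deg_lt_scal, deg_lt_spoly |].
    apply deg_lt_sumR. intros j Hj. apply deg_lt_scal, deg_lt_P; auto.
  - intros x Hx. rewrite <- spoly_sub.
    replace (spoly cs (S m) x - spoly ct (S m) x) with (P (S m) s x - P (S m) t x)
      by (rewrite Hcs, Hct; ring).
    rewrite P_sub_expansion by auto. simpl. rewrite Hd. unfold spoly. ring.
Qed.

Lemma RInt_val_x_dP_P m s cs : 0 < s < 1 ->
  (forall x, P (S m) s x = x ^ S m + spoly cs (S m) x) ->
  RInt_val (fun u => u * dmonic (S m) cs u * P m s u * w s u) 0 1 (- cs m * h m s).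
Proof.
  intros Hs Hcs.
  set (R0 := fun u => spoly (fun k => (INR k - INR (S m)) * cs k) m u + cs m * (P m s u - u ^ m)).
  assert (HR0 : deg_lt m R0).
  { apply deg_lt_plus; [apply deg_lt_spoly | apply deg_lt_scal, monic_sub_deg_lt, monic_pow; auto]. }
  assert (Euler : forall u, u * dmonic (S m) cs u = INR (S m) * P (S m) s u - cs m * P m s u + R0 u).
  { intros u. rewrite x_dmonic, Hcs, !spoly_S. unfold R0. rewrite !S_INR. ring. }
  apply RInt_val_ext with (fun u => (INR (S m) * (P (S m) s u * P m s u * w s u)
    - cs m * (P m s u * P m s u * w s u)) + R0 u * P m s u * w s u); [intros; rewrite Euler; ring |].
  replace (- cs m * h m s) with ((INR (S m) * 0 - cs m * h m s) + 0) by ring.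
  apply RInt_val_plus.
  - apply RInt_val_minus; apply RInt_val_scal; [apply P_orth | apply P_norm]; auto.
  - apply RInt_val_P_orth_deg_lt; auto.
Qed.

Lemma RInt_val_P_x_dP m s cm : 0 < s < 1 ->
  RInt_val (fun u => P (S m) s u * (u * dmonic m cm u) * w s u) 0 1 0.
Proof.
  intros Hs. apply RInt_val_ext with (fun u => (u * dmonic m cm u) * P (S m) s u * w s u);
    [intros; ring |].
  apply RInt_val_P_orth_deg_lt, deg_lt_x_dmonic; auto.
Qed.

Lemma beta_y_integral m s cs cm I : 0 < s < 1 ->
  (forall x, P (S m) s x = x ^ S m + spoly cs (S m) x) ->
  (forall x, P m s x = x ^ m + spoly cm m x) ->
  improper_int01 (fun u => P (S m) s u * P m s u / (1 - u) * w s u) I ->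
  beta * I = - cs m * h m s + B * (P (S m) s s * P m s s * (s * rho s)).
Proof.
  intros Hs Hcs Hcm HI.
  set (dG := fun u => dmonic (S m) cs u * P m s u + P (S m) s u * dmonic m cm u).
  replace (- cs m * h m s) with ((beta + alpha + 1) * 0 + (- cs m * h m s)) by ring.
  apply (beta_improper_by_parts alpha beta alpha_pos beta_pos A B s (fun u => P (S m) s u * P m s u) dG);
    auto.
  - intros u. unfold dG. rewrite Hcs, Hcm.
    apply (derivable_pt_lim_ext (fun u => (u ^ S m + spoly cs (S m) u) * (u ^ m + spoly cm m u)));
      [intros; rewrite Hcs, Hcm; auto |].
    apply (derivable_pt_lim_mult (fun u => u ^ S m + spoly cs (S m) u) (fun u => u ^ m + spoly cm m u));
      apply derivable_pt_lim_monic.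
  - intros u. apply continuity_pt_plus; apply continuity_pt_mult;
      try (apply continuity_pt_P; auto); eapply continuity_pt_deg_lt, deg_lt_dmonic.
  - rewrite <- (Rplus_0_r (- cs m * h m s)).
    apply RInt_val_ext with (fun u => u * dmonic (S m) cs u * P m s u * w s u
      + P (S m) s u * (u * dmonic m cm u) * w s u); [intros; unfold dG; ring |].
    apply RInt_val_plus; [apply RInt_val_x_dP_P | apply RInt_val_P_x_dP]; auto.
Qed.

Lemma derivable_pt_lim_shift_coef_diag m t : 0 < t < 1 ->
  derivable_pt_lim (fun s => shift_coef (S m) t s m) t (r_fun alpha beta B P h (S m) t).
Proof.
  intros Ht. replace (r_fun alpha beta B P h (S m) t) with (B * (P (S m) t t * P m t t * rho t) / h m t)
    by (unfold r_fun, rho; unfold Rdiv; ring).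
  apply derivable_pt_lim_shift_coef; auto.
Qed.

Lemma y_S_eq m t ct (yS : R -> R) : 0 < t < 1 ->
  (forall x, P (S m) t x = x ^ S m + spoly ct (S m) x) ->
  (forall s, 0 < s < 1 -> exists I,
     improper_int01 (fun u => P (S m) s u * P m s u / (1 - u) * w s u) I /\ yS s = beta / h m s * I) ->
  forall s, 0 < s < 1 -> yS s = s * r_fun alpha beta B P h (S m) s - ct m - shift_coef (S m) t s m.
Proof.
  intros Ht Hct HyS s Hs. destruct (HyS s Hs) as [I [HI ->]].
  destruct (P_monic (S m) s Hs) as [cs Hcs]. destruct (P_monic m s Hs) as [cm Hcm].
  replace (s * r_fun alpha beta B P h (S m) s - ct m - shift_coef (S m) t s m)
    with (s * r_fun alpha beta B P h (S m) s - (ct m + shift_coef (S m) t s m)) by ring.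
  rewrite <- (subleading_coef_shift m s t cs ct) by auto.
  replace (beta / h m s * I) with (beta * I / h m s) by (field; apply h_neq0; auto).
  rewrite (beta_y_integral m s cs cm I) by auto.
  unfold r_fun, rho. field. apply h_neq0; auto.
Qed.

End MovingJump.

Theorem lemma3p2 (alpha beta A B : R)
  (P : nat -> R -> R -> R) (h : nat -> R -> R) (y : nat -> R -> R) :
  alpha > 0 -> beta > 0 -> A >= 0 -> A + B >= 0 -> ~ (A = 0 /\ B = 0) ->
  (forall n t, 0 < t < 1 -> monic_poly n (P n t)) ->
  (forall i j t, 0 < t < 1 -> i <> j ->
     RInt_val (fun x => P i t x * P j t x * wt alpha beta A B t x) 0 1 0) ->
  (forall i t, 0 < t < 1 ->
     RInt_val (fun x => P i t x * P i t x * wt alpha beta A B t x) 0 1 (h i t)) ->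
  (forall t, 0 < t < 1 -> y 0%nat t = 0) ->
  (forall m t, 0 < t < 1 -> exists I,
     improper_int01
       (fun u => P (S m) t u * P m t u / (1 - u) * wt alpha beta A B t u) I /\
     y (S m) t = beta / h m t * I) ->
  forall (n : nat) (t : R), 0 < t < 1 ->
  exists d : R,
    derivable_pt_lim (r_fun alpha beta B P h n) t d /\
    derivable_pt_lim (y n) t (t * d).
Proof.
  intros Ha Hb HA HAB HnAB Hmon Horth Hnorm Hy0 HyS n t Ht.
  destruct (derivable_pt_r alpha beta A B P h Ha Hb HA HAB HnAB Hmon Horth Hnorm n t Ht) as [d Hd].
  exists d. split; [exact Hd |].
  destruct n as [|m].
  - replace (t * d) with 0 by (rewrite (uniqueness_limite _ t d 0 Hd (derivable_pt_lim_const 0 t)); ring).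
    apply (derivable_pt_lim_locally_ext (fun _ => 0) _ t 0 1); [auto | intros; symmetry; auto |].
    apply derivable_pt_lim_const.
  - destruct (Hmon (S m) t Ht) as [ct Hct].
    set (r := r_fun alpha beta B P h (S m)).
    apply (derivable_pt_lim_locally_ext (fun s => s * r s - ct m - shift_coef alpha beta B P h (S m) t s m)
      _ t 0 1); [auto | intros s Hs; symmetry; apply (y_S_eq alpha beta A B P h); auto |].
    replace (t * d) with ((1 * r t + t * d - 0) - r t) by ring.
    apply derivable_pt_lim_minus; [apply derivable_pt_lim_minus; [| apply derivable_pt_lim_const] |].
    + apply (derivable_pt_lim_mult id r); [apply derivable_pt_lim_id | exact Hd].
    + apply (derivable_pt_lim_shift_coef_diag alpha beta A B P h); auto.
Qed.
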